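(* For every positive integer $n$, $L(n+1) \ge L(n)$.
   Context: Given a finite multiset of $n$ rectangles (tiles), a rectangular layout is a tiling of a rectangle by all $n$ tiles (axis-parallel, no holes, no overlaps). Two layouts are counted as different if the resulting big rectangles have different perimeters. $L(n)$ denotes the maximum, over all choices of $n$ rectangular tiles, of the number of different rectangular layouts that can be formed using all the tiles. *)

From Stdlib Require Import Reals List Arith.
Import ListNotations.
Open Scope R_scope.

(* A tile is a rectangle given by its two side lengths (width, height). *)
Definition tile := (R * R)%type.

Definition valid_tiles (ts : list tile) : Prop :=
  Forall (fun t => 0 < fst t /\ 0 < snd t) ts.

Definition tw (ts : list tile) (rot : nat -> bool) (i : nat) : R :=
  let t := nth i ts (0, 0) in if rot i then snd t else fst t.
Definition th (ts : list tile) (rot : nat -> bool) (i : nat) : R :=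
  let t := nth i ts (0, 0) in if rot i then fst t else snd t.

Definition tiles_rectangle (ts : list tile) (W H : R) : Prop :=
  0 < W /\ 0 < H /\
  exists (rot : nat -> bool) (x y : nat -> R),
    (forall i, (i < length ts)%nat ->
        0 <= x i /\ x i + tw ts rot i <= W /\
        0 <= y i /\ y i + th ts rot i <= H) /\
    (forall i j, (i < length ts)%nat -> (j < length ts)%nat -> i <> j ->
       forall px py : R,
         ~ ((x i < px < x i + tw ts rot i /\ y i < py < y i + th ts rot i) /\
            (x j < px < x j + tw ts rot j /\ y j < py < y j + th ts rot j))) /\
    (forall px py : R, 0 <= px <= W -> 0 <= py <= H ->
       exists i, (i < length ts)%nat /\
         x i <= px <= x i + tw ts rot i /\ y i <= py <= y i + th ts rot i).

Definition layout_perimeter (ts : list tile) (p : R) : Prop :=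
  exists W H, tiles_rectangle ts W H /\ p = 2 * (W + H).

(* "L(n) >= k": some multiset of n tiles admits at least k rectangular
   layouts with pairwise different perimeters.  L(n) is the supremum of such
   k (in nat extended with infinity). *)
Definition L_ge (n k : nat) : Prop :=
  exists ts : list tile, length ts = n /\ valid_tiles ts /\
  exists ps : list R, length ps = k /\ NoDup ps /\
    Forall (layout_perimeter ts) ps.

(* Cutting one tile into two halves along its first side turns every layout
   of n tiles into a layout of n+1 tiles of the same outer rectangle: the two
   halves sit side by side where the original tile was.  Hence every set of
   perimeters realised by n tiles is realised by n+1 tiles. *)

From Stdlib Require Import Reals List Arith.
From Stdlib Require Import Lra Lia.
Import ListNotations.
Open Scope R_scope.

Definition halve_head (ts : list tile) : list tile :=
  match ts with
  | [] => []
  | (a, b) :: rest => (a / 2, b) :: (a / 2, b) :: rest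
  end.

Lemma length_halve_head (ts : list tile) :
  ts <> [] -> length (halve_head ts) = S (length ts).
Proof. destruct ts as [|[a b] rest]; easy. Qed.

Lemma valid_tiles_halve_head (ts : list tile) :
  valid_tiles ts -> valid_tiles (halve_head ts).
Proof.
  destruct ts as [|[a b] rest]; [easy|].
  intros Hts; inversion Hts as [|? ? [Ha Hb] Hrest]; simpl in Ha, Hb.
  repeat constructor; simpl; lra || assumption.
Qed.

(* Index i of [halve_head ts] is (part of) tile [halve_parent i] of [ts]. *)
Definition halve_parent (i : nat) : nat :=
  match i with 0 | 1 => 0 | S (S j) => S j end%nat.

Section HalveLayout.

Variables (a b : R) (rest : list tile) (rot : nat -> bool) (x y : nat -> R).
Hypothesis a_pos : 0 < a.

Let ts : list tile := (a, b) :: rest.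
Let ts' := halve_head ts.
Let rot' := fun i => rot (halve_parent i).

(* The second half is shifted by a/2 along the side of length a, which is
   horizontal or vertical according to the rotation of the original tile. *)
Let x' := fun i => match i with
  | 1%nat => if rot 0%nat then x 0%nat else x 0%nat + a / 2
  | _ => x (halve_parent i) end.
Let y' := fun i => match i with
  | 1%nat => if rot 0%nat then y 0%nat + a / 2 else y 0%nat
  | _ => y (halve_parent i) end.

Lemma halve_inside_parent i : (i < length ts')%nat ->
  (halve_parent i < length ts)%nat /\
  x (halve_parent i) <= x' i /\
  x' i + tw ts' rot' i <= x (halve_parent i) + tw ts rot (halve_parent i) /\
  y (halve_parent i) <= y' i /\
  y' i + th ts' rot' i <= y (halve_parent i) + th ts rot (halve_parent i).
Proof.
  intros Hi; destruct i as [|[|j]]; unfold tw, th, ts', ts, rot', x', y' in *; simpl in *.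
  1, 2: destruct (rot 0%nat); repeat split; lia || lra.
  repeat split; lia || lra.
Qed.

Lemma halves_disjoint i j : i <> j -> halve_parent i = halve_parent j ->
  forall px py,
    ~ ((x' i < px < x' i + tw ts' rot' i /\ y' i < py < y' i + th ts' rot' i) /\
       (x' j < px < x' j + tw ts' rot' j /\ y' j < py < y' j + th ts' rot' j)).
Proof.
  intros Hij Hpar px py.
  assert (Hsib : (i = 0 /\ j = 1 \/ i = 1 /\ j = 0)%nat).
  { destruct i as [|[|i]], j as [|[|j]]; simpl in Hpar; lia. }
  destruct Hsib as [[-> ->]|[-> ->]]; unfold tw, th, ts', rot', x', y';
    simpl; destruct (rot 0%nat); lra.
Qed.

Lemma halves_cover_head px py :
  x 0%nat <= px <= x 0%nat + tw ts rot 0 ->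
  y 0%nat <= py <= y 0%nat + th ts rot 0 ->
  exists i, (i < 2)%nat /\
    x' i <= px <= x' i + tw ts' rot' i /\ y' i <= py <= y' i + th ts' rot' i.
Proof.
  unfold tw, th, ts', ts, rot', x', y'; simpl.
  destruct (rot 0%nat) eqn:Erot; intros Hx Hy.
  - destruct (Rle_lt_dec py (y 0%nat + a / 2)); [exists 0%nat | exists 1%nat];
      simpl; rewrite Erot; simpl; repeat split; lia || lra.
  - destruct (Rle_lt_dec px (x 0%nat + a / 2)); [exists 0%nat | exists 1%nat];
      simpl; rewrite Erot; simpl; repeat split; lia || lra.
Qed.

Lemma halve_tiles_rectangle_of (W H : R) :
  (forall i, (i < length ts)%nat ->
     0 <= x i /\ x i + tw ts rot i <= W /\ 0 <= y i /\ y i + th ts rot i <= H) ->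
  (forall i j, (i < length ts)%nat -> (j < length ts)%nat -> i <> j ->
     forall px py,
       ~ ((x i < px < x i + tw ts rot i /\ y i < py < y i + th ts rot i) /\
          (x j < px < x j + tw ts rot j /\ y j < py < y j + th ts rot j))) ->
  (forall px py, 0 <= px <= W -> 0 <= py <= H ->
     exists i, (i < length ts)%nat /\
       x i <= px <= x i + tw ts rot i /\ y i <= py <= y i + th ts rot i) ->
  0 < W -> 0 < H -> tiles_rectangle ts' W H.
Proof.
  intros Hin Hdisj Hcov HW HH.
  split; [exact HW | split; [exact HH |]].
  exists rot', x', y'; split; [| split].
  - intros i Hi.
    destruct (halve_inside_parent i Hi) as [Hp [H1 [H2 [H3 H4]]]].
    destruct (Hin _ Hp); repeat split; lra.
  - intros i j Hi Hj Hij px py.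
    destruct (Nat.eq_dec (halve_parent i) (halve_parent j)) as [E|E].
    + exact (halves_disjoint i j Hij E px py).
    + destruct (halve_inside_parent i Hi) as [Hp [H1 [H2 [H3 H4]]]].
      destruct (halve_inside_parent j Hj) as [Gp [G1 [G2 [G3 G4]]]].
      intros Hboth; apply (Hdisj _ _ Hp Gp E px py); repeat split; lra.
  - intros px py Px Py.
    destruct (Hcov px py Px Py) as [[|j] [Hj Hpj]].
    + destruct Hpj as [Hx Hy].
      destruct (halves_cover_head px py Hx Hy) as [i [Hi Hpi]].
      exists i; split; [simpl; lia | exact Hpi].
    + exists (S (S j)); split; [simpl in *; lia | exact Hpj].
Qed.

End HalveLayout.

Lemma tiles_rectangle_halve_head (ts : list tile) (W H : R) :
  valid_tiles ts -> tiles_rectangle ts W H ->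
  tiles_rectangle (halve_head ts) W H.
Proof.
  destruct ts as [|[a b] rest]; [easy|].
  intros Hval [HW [HH [rot [x [y [Hin [Hdisj Hcov]]]]]]].
  destruct (Forall_inv Hval) as [Ha _].
  exact (halve_tiles_rectangle_of a b rest rot x y Ha W H Hin Hdisj Hcov HW HH).
Qed.

Lemma layout_perimeter_halve_head (ts : list tile) (p : R) :
  valid_tiles ts -> layout_perimeter ts p -> layout_perimeter (halve_head ts) p.
Proof.
  intros Hval [W [H [Hrect Hp]]].
  exists W, H; split; [apply tiles_rectangle_halve_head |]; assumption.
Qed.

Theorem mainTheorem5 : forall n : nat, (0 < n)%nat ->
  forall k : nat, L_ge n k -> L_ge (S n) k.
Proof.
  intros n Hn k [ts [Hlen [Hval [ps [Hps [Hnd Hall]]]]]].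
  assert (Hne : ts <> []) by (intros ->; simpl in Hlen; lia).
  exists (halve_head ts); split; [| split].
  - rewrite length_halve_head, Hlen; easy.
  - exact (valid_tiles_halve_head ts Hval).
  - exists ps; repeat split; try assumption.
    eapply Forall_impl; [| exact Hall].
    intros p; exact (layout_perimeter_halve_head ts p Hval).
Qed.
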